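(* Let $p$ be a prime, let $\mathcal S$ be a compact Riemann surface of genus $g=p+1$, and let $G$ be a group acting faithfully by conformal automorphisms on $\mathcal S$ with $|G|=\rho p$ for an integer $\rho$. (a) If $\rho$ is coprime to $p$ and $\rho$ has no divisor $d\ne1$ with $d\equiv1\pmod p$ (in particular if $p>\rho$), then $G$ is a semidirect product $P\rtimes Q$ where $P\cong C_p$ (a normal Sylow $p$-subgroup) and $|Q|=\rho$. (b) If, in addition, $p$ is coprime to all the elliptic periods in the signature $\sigma$ of the action of $G$, then $Q$ has a faithful action, with signature $\sigma$, as a group of automorphisms of the Riemann surface $\mathcal T:=\mathcal S/P$, which has genus $2$.
   Context: If $G$ acts on $\mathcal S=\mathbb H/K$ ($K$ a Fuchsian surface group), then $G\cong\Gamma/K$ for a cocompact Fuchsian group $\Gamma$ containing $K$ as a normal subgroup; the signature of the action is the signature $(\gamma;m_1,\dots,m_k)$ of $\Gamma$ (genus of $\mathcal S/G$ and elliptic periods $m_i$). *)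

From HB Require Import structures.
From mathcomp Require Import all_boot all_order all_algebra all_fingroup all_solvable.
Set Implicit Arguments. Unset Strict Implicit. Unset Printing Implicit Defensive.
Import GRing.Theory Num.Theory.

(* Combinatorial (Riemann existence theorem) encoding of a conformal action
   of a finite group G on a compact Riemann surface of genus g >= 2 with
   signature (gam; m_1,...,m_k):  a surface-kernel epimorphism
   Gamma(gam; m_1..m_k) ->> G, i.e. a generating vector
   (a_1,b_1,...,a_gam,b_gam,c_1,...,c_k) of G with ord(c_j) = m_j and
   prod [a_i,b_i] * prod c_j = 1, together with the Riemann-Hurwitz formula
   2g - 2 = |G| (2 gam - 2 + sum (1 - 1/m_j)). *)

Section GenVector.
Variable gT : finGroupType.

Definition gen_vector (G : {set gT}) (gam : nat) (ms : seq nat)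
    (a b : 'I_gam -> gT) (c : 'I_(size ms) -> gT) : Prop :=
  [/\ all (fun m => 1 < m)%N ms,
      [/\ (forall i, a i \in G), (forall i, b i \in G) & (forall j, c j \in G)],
      (forall j : 'I_(size ms), #[c j]%g = nth 0%N ms j),
      << [set a i | i : 'I_gam] :|: [set b i | i : 'I_gam]
           :|: [set c j | j : 'I_(size ms)] >>%g = G
    & ((\prod_(i < gam) [~ a i, b i]) * (\prod_(j < size ms) c j))%g = 1%g].

Definition riemann_hurwitz (G : {set gT}) (g gam : nat) (ms : seq nat) : Prop :=
  ((2 * g%:R - 2 : rat) =
   #|G|%:R * (2 * gam%:R - 2 + \sum_(m <- ms) (1 - (m%:R)^-1)))%R.

End GenVector.

Arguments gen_vector {gT} G gam ms a b c.
Arguments riemann_hurwitz {gT} G g gam ms.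

From HB Require Import structures.
From mathcomp Require Import all_boot all_order all_algebra all_fingroup all_solvable.
From mathcomp Require Import ring.
Import GRing.Theory Num.Theory.

Set Implicit Arguments.
Unset Strict Implicit.
Unset Printing Implicit Defensive.

(* The number of Sylow p-subgroups of G divides |G| = rho p and is 1 mod p,
   hence is prime to p and divides rho, so the hypothesis on rho forces it to
   be 1: the Sylow p-subgroup P is normal, of order p, and by Schur-Zassenhaus
   has a complement Q of order rho.  Since every generator of the
   surface-kernel vector has order prime to p, its image in G/P has the same
   orders, so it is a generating vector of G/P with the same signature; the
   Riemann-Hurwitz formula for G/P is that of G divided by p, so the genus g'
   of S/P has 2g' - 2 = (2(p+1) - 2)/p = 2. *)

Local Open Scope group_scope.

Section NormalSylow.
Variable gT : finGroupType.
Implicit Types G H P : {group gT}.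

Lemma card_Syl_eq1 p rho k G :
  prime p -> #|G| = (rho * p ^ k)%N ->
  (forall d, d %| rho -> d %% p = 1 -> d = 1)%N ->
  #|'Syl_p(G)| = 1%N.
Proof.
move=> pr_p oG no_div; have Syl_mod := card_Syl_mod G pr_p.
apply: no_div => //; have := card_Syl_dvd p G.
rewrite oG Gauss_dvdl // coprimeXr //.
by rewrite coprime_sym -coprime_modr Syl_mod coprimen1.
Qed.

Lemma card_Sylow_coprime p rho k G P :
  prime p -> p.-Sylow(G) P -> #|G| = (rho * p ^ k)%N -> coprime rho p ->
  #|P| = (p ^ k)%N.
Proof.
move=> pr_p sylP oG co_rho_p.
have /andP[rho_gt0 pk_gt0] : (0 < rho) && (0 < p ^ k) by rewrite -muln_gt0 -oG.
rewrite (card_Hall sylP) oG p_part lognM // (@logn_coprime p rho).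
  by rewrite add0n pfactorK.
by rewrite coprime_sym.
Qed.

Lemma normal_Hall_sdprod G H :
  Hall G H -> H <| G -> exists K : {group gT}, H ><| K = G.
Proof.
move=> hallH nsHG; have /splitsP[K] := SchurZassenhaus_split hallH nsHG.
by rewrite complgC => /(sdprod_normal_complP nsHG) defG; exists K.
Qed.

End NormalSylow.

Section QuotientGenVector.
Variables (gT : finGroupType) (H : {group gT}).

Lemma order_coset_coprime x :
  x \in 'N(H) -> coprime #|H| #[x] -> #[coset H x] = #[x].
Proof.
move=> Nx co_H_x; rewrite /order -quotient_cycle //.
rewrite card_quotient ?cycle_subG // -indexgI coprime_TIg ?indexg1 //.
by rewrite coprime_sym.
Qed.

Lemma quotient_imset (I : finType) (f : I -> gT) :
  (forall i, f i \in 'N(H)) ->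
  [set f i | i : I] / H = [set coset H (f i) | i : I].
Proof.
move=> Nf; rewrite /quotient morphimEsub; first by rewrite -imset_comp.
by apply/subsetP => _ /imsetP[i _ ->].
Qed.

Lemma gen_vector_quotient (G : {group gT}) gam ms a b c :
  G \subset 'N(H) -> all (coprime #|H|) ms ->
  gen_vector G gam ms a b c ->
  gen_vector (G / H) gam ms
    (fun i => coset H (a i)) (fun i => coset H (b i)) (fun j => coset H (c j)).
Proof.
move=> nHG /allP co_H_ms [ms_gt1 [aG bG cG] ord_c gen_abc rel_abc].
have NG x : x \in G -> x \in 'N(H) by apply: (subsetP nHG).
split=> //.
- by split=> i; apply: mem_quotient.
- move=> j; rewrite order_coset_coprime ?NG // ord_c.
  by apply: co_H_ms; apply: mem_nth.
- rewrite -gen_abc quotient_gen; last first.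
    by apply: subset_trans nHG; rewrite -gen_abc subset_gen.
  by rewrite !quotientU !quotient_imset => // i; apply: NG.
have coset_comm i : [~ coset H (a i), coset H (b i)] = coset H [~ a i, b i].
  by rewrite morphR ?NG.
have N_comm i : [~ a i, b i] \in 'N(H) by rewrite NG ?groupR.
rewrite (eq_bigr _ (fun i _ => coset_comm i)) -!morph_prod -?morphM ?rel_abc ?morph1.
all: by rewrite ?group_prod // => i _; rewrite ?NG.
Qed.

End QuotientGenVector.

Lemma riemann_hurwitz_index (gT rT : finGroupType) (G : {set gT}) (K : {set rT})
    g g' n gam ms :
  #|G| = (n * #|K|)%N -> (0 < n)%N ->
  (2 * g%:R - 2 = n%:R * (2 * g'%:R - 2) :> rat)%R ->
  riemann_hurwitz G g gam ms -> riemann_hurwitz K g' gam ms.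
Proof.
rewrite /riemann_hurwitz => oG n_gt0 ->; rewrite oG natrM -mulrA.
by apply: mulfI; rewrite pnatr_eq0 -lt0n.
Qed.

Theorem lemma4p1 (p rho : nat) (gT : finGroupType) (G : {group gT})
    (gam : nat) (ms : seq nat)
    (a b : 'I_gam -> gT) (c : 'I_(size ms) -> gT) :
  prime p ->
  gen_vector G gam ms a b c ->
  riemann_hurwitz G (p.+1) gam ms ->
  #|G| = (rho * p)%N ->
  coprime rho p ->
  (forall d : nat, d %| rho -> d %% p = 1 -> d = 1)%N ->
  exists P Q : {group gT},
    [/\ [/\ (p.-Sylow(G) P)%g, (P <| G)%g, cyclic P & #|P| = p],
        (P ><| Q = G)%g, #|Q| = rho
      & (all (fun m => coprime p m) ms ->
         gen_vector (G / P)%g gam ms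
           (fun i => coset P (a i)) (fun i => coset P (b i))
           (fun j => coset P (c j))
         /\ riemann_hurwitz (G / P)%g 2 gam ms)].
Proof.
move=> pr_p gv rh oG co_rho_p no_div.
have oG1 : #|G| = (rho * p ^ 1)%N by rewrite expn1.
have [P sylP nsPG] : exists2 P : {group gT}, p.-Sylow(G) P & P <| G.
  by apply/normal_sylowP; rewrite (card_Syl_eq1 pr_p oG1 no_div).
have oP : #|P| = p by rewrite (card_Sylow_coprime pr_p sylP oG1) ?expn1.
have [Q defG] := normal_Hall_sdprod (pHall_Hall sylP) nsPG.
have oQ : #|Q| = rho.
  apply/eqP; rewrite -(eqn_pmul2l (prime_gt0 pr_p)) -{1}oP (sdprod_card defG).
  by rewrite oG mulnC.
have oG_P : #|G| = (p * #|G / P|)%N.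
  by rewrite card_quotient ?normal_norm // -oP Lagrange ?normal_sub.
exists P, Q; split=> //; first by rewrite prime_cyclic ?oP.
move=> co_p_ms; split.
  by apply: gen_vector_quotient; rewrite ?normal_norm ?oP.
apply: riemann_hurwitz_index oG_P (prime_gt0 pr_p) _ rh.
by rewrite -addn1 natrD; ring.
Qed.
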